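(* Let $S$ be a string of length $n$ and, for $1\le i\le n$, let $c_i$ be the center of the longest palindromic suffix of $S[1..i]$. Then the array $(\tilde b_1,\dots,\tilde b_n)$ with $\tilde b_i=2c_i-i$ is a counter array, i.e. $1\le \tilde b_i\le i$ for all $i$ and $\tilde b_{i+1}\ge \tilde b_i-1$ for all $1\le i<n$. Moreover, the map $(c_1,\dots,c_n)\mapsto(\tilde b_1,\dots,\tilde b_n)$ is injective.
   Context: The center of a substring $S[a..b]$ is $(a+b)/2$. A counter array of length $n$ is an integer array $(a_1,\dots,a_n)$ with $1\le a_i\le i$ for all $i$ and $a_{i+1}\ge a_i-1$ for all $1\le i<n$. *)

(* Strings are sequences over an arbitrary eqType alphabet;
   positions are 1-indexed as in the paper. *)
From mathcomp Require Import all_boot all_order all_algebra.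
Set Implicit Arguments. Unset Strict Implicit. Unset Printing Implicit Defensive.
Import Order.TTheory GRing.Theory Num.Theory.
Local Open Scope ring_scope.

(* S[a..b] (1-indexed, inclusive): the items at positions a, a+1, ..., b. *)
Definition substr (T : Type) (S : seq T) (a b : nat) : seq T :=
  drop a.-1 (take b S).

Definition palindrome (T : eqType) (s : seq T) : bool := rev s == s.

(* Start position a of the longest palindromic suffix S[a..i] of S[1..i]:
   the smallest a in 1..i such that S[a..i] is a palindrome
   (a = i always works for 1 <= i <= size S). *)
Definition lps_start (T : eqType) (S : seq T) (i : nat) : nat :=
  (find (fun a => palindrome (substr S a i)) (iota 1 i)).+1.

Definition center (a b : nat) : rat := (a%:R + b%:R) / 2%:R.

Definition lps_center (T : eqType) (S : seq T) (i : nat) : rat :=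
  center (lps_start S i) i.

Definition btilde (T : eqType) (S : seq T) (i : nat) : rat :=
  2%:R * lps_center S i - i%:R.

From mathcomp Require Import all_boot all_order all_algebra.
From mathcomp Require Import ring zify.
Import Order.TTheory GRing.Theory Num.Theory.
Local Open Scope ring_scope.

(* b~_i is the start a_i of the longest palindromic suffix of S[1..i], so
   1 <= b~_i <= i.  If S[a..i+1] is a palindrome with a < i, stripping its
   two ends leaves the palindrome S[a+1..i], whence a_i <= a_(i+1) + 1.
   Injectivity holds because c_i = (b~_i + i) / 2. *)

Section LongestPalindromicSuffix.

Variable T : eqType.
Implicit Types (S s : seq T) (x y : T).

Lemma btildeE S i : btilde S i = (lps_start S i)%:R.
Proof. by rewrite /btilde /lps_center /center; field. Qed.

Lemma lps_centerE S i : lps_center S i = (btilde S i + i%:R) / 2%:R.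
Proof. by rewrite /btilde; field. Qed.

Lemma palindrome_small s : (size s <= 1)%N -> palindrome s.
Proof. by case: s => [|x [|y s]] //= _; rewrite /palindrome. Qed.

Lemma palindrome_inner x y s : palindrome (x :: rcons s y) -> palindrome s.
Proof. by rewrite /palindrome rev_cons rev_rcons => /eqP[_ /rcons_inj[->]]. Qed.

Lemma substr_ends x0 S a i : (1 <= a <= i)%N -> (i < size S)%N ->
  substr S a i.+1 = nth x0 S a.-1 :: rcons (substr S a.+1 i) (nth x0 S i).
Proof.
move=> Hai Hi.
have Hsz : (a.-1 < size (take i S))%N by rewrite size_take; case: ifP; lia.
rewrite /substr (take_nth x0 Hi) drop_rcons ?(drop_nth x0 Hsz); last lia.
by rewrite nth_take; [have -> : a.-1.+1 = a by lia | lia].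
Qed.

Lemma has_palindromic_suffix S i : (1 <= i)%N ->
  has (fun a => palindrome (substr S a i)) (iota 1 i).
Proof.
move=> Hi; apply/hasP; exists i; first by rewrite mem_iota; lia.
by apply: palindrome_small; rewrite /substr size_drop size_take; case: ifP; lia.
Qed.

Lemma lps_start_bounds S i : (1 <= i)%N -> (1 <= lps_start S i <= i)%N.
Proof.
move=> /(has_palindromic_suffix S); rewrite has_find size_iota /lps_start; lia.
Qed.

Lemma palindrome_lps S i : (1 <= i)%N -> palindrome (substr S (lps_start S i) i).
Proof.
move=> /(has_palindromic_suffix S) Hhas; have := nth_find 0%N Hhas.
move: Hhas; rewrite has_find size_iota => Hlt.
by rewrite nth_iota // add1n.
Qed.

Lemma lps_start_min S i a : (1 <= a <= i)%N ->
  palindrome (substr S a i) -> (lps_start S i <= a)%N.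
Proof.
move=> Ha Hpal; rewrite /lps_start.
set k := find _ _; case: ltnP => // Hlt.
have /(before_find 0%N) : (a.-1 < k)%N by lia.
rewrite nth_iota; last lia.
have -> : (1 + a.-1 = a)%N by lia.
by rewrite Hpal.
Qed.

Lemma lps_start_succ S i : (1 <= i < size S)%N ->
  (lps_start S i <= (lps_start S i.+1).+1)%N.
Proof.
case/andP=> Hi Hin; case: S Hin => [//|x0 s] Hin; set S := x0 :: s.
have := lps_start_bounds S i Hi.
have := lps_start_bounds S i.+1 isT; set a := lps_start S i.+1 => Ha Hb.
case: (leqP i a) => Hai; first lia.
apply: lps_start_min; first lia.
apply: (@palindrome_inner (nth x0 S a.-1) (nth x0 S i)).
by rewrite -substr_ends ?palindrome_lps //; lia.
Qed.

End LongestPalindromicSuffix.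

Theorem lemma3p5 (T : eqType) (S : seq T) (n : nat) (Hn : size S = n) :
  (forall i : nat, (1 <= i <= n)%N ->
     exists a : nat, btilde S i = a%:R /\ (1 <= a <= i)%N) /\
  (forall i : nat, (1 <= i < n)%N -> btilde S i - 1 <= btilde S i.+1) /\
  (forall S' : seq T, size S' = n ->
     (forall i : nat, (1 <= i <= n)%N -> btilde S i = btilde S' i) ->
     forall i : nat, (1 <= i <= n)%N -> lps_center S i = lps_center S' i).
Proof.
split; [|split].
- move=> i /andP[Hi _]; exists (lps_start S i).
  by rewrite btildeE lps_start_bounds.
- move=> i Hi; rewrite !btildeE lerBlDr natr1 ler_nat.
  by apply: lps_start_succ; rewrite Hn.
- by move=> S' _ Hb i Hi; rewrite !lps_centerE Hb.
Qed.
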